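(* Let $h:\mathbb{R}\to\mathbb{R}$ be of class $C^2$. Let $\mathcal{H}_0=\{(x,\varPhi)\in\mathbb{R}^2 \mid \varPhi>0,\ \varPhi^2\neq h(x)\}$ and equip it with the Riemannian metric \[ g_h=\frac{\left(h(x)-\varPhi^2\right)^2dx^2+d\varPhi^2}{\varPhi^2}. \] Then on the whole domain $\mathcal{H}_0$ the metric $g_h$ has constant sectional curvature equal to $-1$; i.e., it everywhere describes hyperbolic geometry.
   Context: $\mathcal{H}=\{(x,\varPhi)\in\mathbb{R}^2\mid \varPhi>0\}$ is the upper half plane. The expression for $g_h$ is degenerate exactly where $\varPhi^2=h(x)$, which is why these points are removed; the Riemannian manifold $\mathbb{M}_h=(\mathcal{H}_0,g_h)$ is called the Linear-$2^{\mathrm{nd}}$-order-ODE upper half plane. *)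

From Stdlib Require Import Reals Lra.
From Coquelicot Require Import Coquelicot.
Open Scope R_scope.

(* A metric tensor on (an open subset of) R^2 in coordinates (x0, x1):
   g i j x0 x1, for indices i j in {0,1}. *)
Definition metric2 := nat -> nat -> R -> R -> R.

Definition sum2 (f : nat -> R) : R := f 0%nat + f 1%nat.

Definition pd (i : nat) (f : R -> R -> R) (x y : R) : R :=
  match i with
  | 0%nat => Derive (fun t => f t y) x
  | _ => Derive (fun t => f x t) y
  end.

Definition gdet (g : metric2) (x y : R) : R :=
  g 0%nat 0%nat x y * g 1%nat 1%nat x y - g 0%nat 1%nat x y * g 1%nat 0%nat x y.

Definition ginv (g : metric2) (k l : nat) (x y : R) : R :=
  match k, l with
  | 0%nat, 0%nat => g 1%nat 1%nat x y / gdet g x y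
  | 0%nat, _ => - g 0%nat 1%nat x y / gdet g x y
  | _, 0%nat => - g 1%nat 0%nat x y / gdet g x y
  | _, _ => g 0%nat 0%nat x y / gdet g x y
  end.

Definition christoffel (g : metric2) (k i j : nat) (x y : R) : R :=
  / 2 * sum2 (fun l => ginv g k l x y *
     (pd i (g j l) x y + pd j (g i l) x y - pd l (g i j) x y)).

(* Riemann tensor R^l_{ijk}, with R(d_i,d_j) d_k = R^l_{ijk} d_l and
   R(X,Y)Z = nabla_X nabla_Y Z - nabla_Y nabla_X Z - nabla_[X,Y] Z *)
Definition riemann (g : metric2) (l i j k : nat) (x y : R) : R :=
  pd i (christoffel g l j k) x y - pd j (christoffel g l i k) x y
  + sum2 (fun m => christoffel g m j k x y * christoffel g l i m x y
                   - christoffel g m i k x y * christoffel g l j m x y).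

(* Sectional curvature of the (unique) tangent 2-plane span(d_0, d_1):
   K = <R(d_0,d_1) d_1, d_0> / (g00 g11 - g01^2)  (= Gaussian curvature). *)
Definition sectional_curvature (g : metric2) (x y : R) : R :=
  sum2 (fun l => g 0%nat l x y * riemann g l 0%nat 1%nat 1%nat x y) / gdet g x y.

Definition g_h (h : R -> R) : metric2 := fun i j x p =>
  match i, j with
  | 0%nat, 0%nat => (h x - p ^ 2) ^ 2 / p ^ 2
  | 1%nat, 1%nat => 1 / p ^ 2
  | _, _ => 0
  end.

(** For an orthogonal metric [E dx^2 + G dy^2] whose [G] does not depend on
    [x], the only Christoffel symbols entering [R^0_{011}] are
    [Γ^0_{01} = E_y / 2E] and [Γ^1_{11} = G_y / 2G], so the curvature involves
    no [x]-derivative at all.  For [g_h], [E = u^2/Φ^2] with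
    [u = h x - Φ^2] and [G = 1/Φ^2], giving [Γ^0_{01} = -2Φ/u - 1/Φ] and
    [Γ^1_{11} = -1/Φ], and the terms in [u] cancel, leaving [K = -1]. *)
From Stdlib Require Import Reals Lra.
From Coquelicot Require Import Coquelicot.
Open Scope R_scope.

Lemma pd_eq0 (i : nat) (f : R -> R -> R) (x y : R) :
  (forall u v, f u v = 0) -> pd i f x y = 0.
Proof.
  intros Hf; destruct i; unfold pd;
    rewrite (Derive_ext _ (fun _ => 0)); auto using Derive_const.
Qed.

Lemma locally_neq0 (f : R -> R) (a : R) :
  continuous f a -> f a <> 0 -> locally a (fun t => f t <> 0).
Proof. intros Hf Ha; apply (Hf (fun u => u <> 0)), open_neq, Ha. Qed.

Section OrthogonalMetric.

Variable g : metric2.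
Hypothesis g01_eq0 : forall x y, g 0%nat 1%nat x y = 0.
Hypothesis g10_eq0 : forall x y, g 1%nat 0%nat x y = 0.
Hypothesis pd0_g11_eq0 : forall x y, pd 0 (g 1%nat 1%nat) x y = 0.

Lemma pd_g01_eq0 i x y : pd i (g 0%nat 1%nat) x y = 0.
Proof. exact (pd_eq0 i _ x y g01_eq0). Qed.

Lemma pd_g10_eq0 i x y : pd i (g 1%nat 0%nat) x y = 0.
Proof. exact (pd_eq0 i _ x y g10_eq0). Qed.

Lemma christoffel_sym k x y :
  christoffel g k 1%nat 0%nat x y = christoffel g k 0%nat 1%nat x y.
Proof.
  unfold christoffel, sum2.
  rewrite !(pd_g01_eq0 _ x y), !(pd_g10_eq0 _ x y); ring.
Qed.

Lemma christoffel011_eq0 x y : christoffel g 0%nat 1%nat 1%nat x y = 0.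
Proof.
  unfold christoffel, sum2, ginv.
  rewrite pd0_g11_eq0, g01_eq0, !pd_g10_eq0; unfold Rdiv; ring.
Qed.

Lemma christoffel001 x y : g 0%nat 0%nat x y <> 0 -> g 1%nat 1%nat x y <> 0 ->
  christoffel g 0%nat 0%nat 1%nat x y = pd 1 (g 0%nat 0%nat) x y / (2 * g 0%nat 0%nat x y).
Proof.
  intros H0 H1; unfold christoffel, sum2, ginv, gdet.
  rewrite g01_eq0, g10_eq0, !pd_g01_eq0, !pd_g10_eq0; field; auto.
Qed.

Lemma christoffel111 x y : g 0%nat 0%nat x y <> 0 -> g 1%nat 1%nat x y <> 0 ->
  christoffel g 1%nat 1%nat 1%nat x y = pd 1 (g 1%nat 1%nat) x y / (2 * g 1%nat 1%nat x y).
Proof.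
  intros H0 H1; unfold christoffel, sum2, ginv, gdet.
  rewrite g01_eq0, g10_eq0, !pd_g10_eq0; field; auto.
Qed.

Lemma sectional_curvature_orthogonal x y :
  g 0%nat 0%nat x y <> 0 -> g 1%nat 1%nat x y <> 0 ->
  sectional_curvature g x y =
    (christoffel g 1%nat 1%nat 1%nat x y * christoffel g 0%nat 0%nat 1%nat x y
     - christoffel g 0%nat 0%nat 1%nat x y ^ 2
     - pd 1 (christoffel g 0%nat 0%nat 1%nat) x y) / g 1%nat 1%nat x y.
Proof.
  intros H0 H1.
  assert (pd0_christoffel011 : pd 0 (christoffel g 0%nat 1%nat 1%nat) x y = 0)
    by apply pd_eq0, christoffel011_eq0.
  unfold sectional_curvature, riemann, sum2, gdet.
  rewrite pd0_christoffel011, christoffel011_eq0, christoffel_sym, g01_eq0, g10_eq0.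
  field; auto.
Qed.

End OrthogonalMetric.

Section HyperbolicODEPlane.

Variable h : R -> R.

Lemma pd0_g_h11_eq0 x y : pd 0 (g_h h 1%nat 1%nat) x y = 0.
Proof. unfold pd, g_h; apply Derive_const. Qed.

Lemma g_h00_neq0 x y : y <> 0 -> h x - y ^ 2 <> 0 -> g_h h 0%nat 0%nat x y <> 0.
Proof.
  intros Hy Hu; unfold g_h, Rdiv.
  apply Rmult_integral_contrapositive_currified;
    [| apply Rinv_neq_0_compat]; apply pow_nonzero; auto.
Qed.

Lemma g_h11_neq0 x y : y <> 0 -> g_h h 1%nat 1%nat x y <> 0.
Proof.
  intros Hy; unfold g_h, Rdiv.
  apply Rmult_integral_contrapositive_currified;
    [lra | apply Rinv_neq_0_compat, pow_nonzero; auto].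
Qed.

Lemma g_h_christoffel001 x y : y <> 0 -> h x - y ^ 2 <> 0 ->
  christoffel (g_h h) 0%nat 0%nat 1%nat x y = -2 * y / (h x - y ^ 2) - 1 / y.
Proof.
  intros Hy Hu.
  assert (pd1_g00 : pd 1 (g_h h 0%nat 0%nat) x y
                    = -4 * (h x - y ^ 2) / y - 2 * (h x - y ^ 2) ^ 2 / y ^ 3).
  { apply is_derive_unique; unfold g_h; auto_derive; [auto | field; auto]. }
  rewrite christoffel001, pd1_g00;
    auto using pd0_g_h11_eq0, g_h00_neq0, g_h11_neq0.
  unfold g_h; field; auto.
Qed.

Lemma g_h_christoffel111 x y : y <> 0 -> h x - y ^ 2 <> 0 ->
  christoffel (g_h h) 1%nat 1%nat 1%nat x y = - 1 / y.
Proof.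
  intros Hy Hu.
  assert (pd1_g11 : pd 1 (g_h h 1%nat 1%nat) x y = -2 / y ^ 3).
  { apply is_derive_unique; unfold g_h; auto_derive; [auto | field; auto]. }
  rewrite christoffel111, pd1_g11;
    auto using pd0_g_h11_eq0, g_h00_neq0, g_h11_neq0.
  unfold g_h; field; auto.
Qed.

Lemma pd1_g_h_christoffel001 x y : y <> 0 -> h x - y ^ 2 <> 0 ->
  pd 1 (christoffel (g_h h) 0%nat 0%nat 1%nat) x y
  = -2 / (h x - y ^ 2) - 4 * y ^ 2 / (h x - y ^ 2) ^ 2 + 1 / y ^ 2.
Proof.
  intros Hy Hu.
  assert (near_y : locally y (fun t => t <> 0 /\ h x - t ^ 2 <> 0)).
  { apply filter_and; [exact (open_neq 0 y Hy) |].
    apply (locally_neq0 (fun t => h x - t ^ 2)); [| exact Hu].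
    apply (ex_derive_continuous (V := R_NormedModule)); auto_derive; auto. }
  unfold pd; rewrite (Derive_ext_loc _ (fun t => -2 * t / (h x - t ^ 2) - 1 / t)).
  - apply is_derive_unique; auto_derive; [auto | field; auto].
  - apply (filter_imp _ _ (fun t Ht => g_h_christoffel001 x t (proj1 Ht) (proj2 Ht)) near_y).
Qed.

End HyperbolicODEPlane.

Theorem lemma2p3 (h : R -> R)
  (h_d1 : forall x, ex_derive h x)
  (h_d2 : forall x, ex_derive (Derive h) x)
  (h_c2 : forall x, continuous (Derive (Derive h)) x) :
  forall x Phi : R, 0 < Phi -> Phi ^ 2 <> h x ->
    sectional_curvature (g_h h) x Phi = -1.
Proof.
  intros x Phi HPhi Hne.
  assert (Hy : Phi <> 0) by lra.
  assert (Hu : h x - Phi ^ 2 <> 0) by lra.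
  rewrite sectional_curvature_orthogonal;
    auto using pd0_g_h11_eq0, g_h00_neq0, g_h11_neq0.
  rewrite g_h_christoffel001, g_h_christoffel111, pd1_g_h_christoffel001; auto.
  unfold g_h; field; auto.
Qed.
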